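(* Let $X$ be a shift space over a finite alphabet. If $X$ has the almost specification property, then $X$ is both boundedly supermultiplicative and balanced.
   Context: For a shift space $X\subseteq\mathcal{A}^{\mathbb{Z}}$ ($\mathcal{A}$ finite), $\mathcal{B}_n(X)$ denotes the set of words of length $n$ appearing in points of $X$, and $\mathcal{B}(X)=\bigcup_{n\ge1}\mathcal{B}_n(X)$. For $\omega\in\mathcal{B}(X)$ and $r\in\mathbb{N}$, $\mathcal{B}_{\omega,r}(X)$ is the set of words $u$ of length $r$ such that $\omega u\in\mathcal{B}(X)$. $X$ has the almost specification property if there is $N\ge1$ such that for all $u,v\in\mathcal{B}(X)$ there exists $w\in\mathcal{B}(X)$ with $|w|\le N$ and $uwv\in\mathcal{B}(X)$. $X$ is boundedly supermultiplicative if there is $K\ge1$ with $|\mathcal{B}_m(X)|\cdot|\mathcal{B}_n(X)|\le K|\mathcal{B}_{m+n}(X)|$ for all $m,n\ge1$. $X$ is balanced if there is $B>0$ such that $|\mathcal{B}_{\omega,r}(X)|/|\mathcal{B}_r(X)|\ge B$ for every $\omega\in\mathcal{B}(X)$ and every $r\in\mathbb{N}$. *)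

From mathcomp Require Import all_boot all_order all_algebra.
From mathcomp Require Import boolp reals.
Set Implicit Arguments. Unset Strict Implicit. Unset Printing Implicit Defensive.
Import Order.TTheory GRing.Theory Num.Theory.

Local Open Scope ring_scope.

Section Shifts.
Variable A : finType.

Definition shift (x : int -> A) : int -> A := fun i => x (i + 1).

(* X is closed in the product topology: x is in X as soon as every central
   window x_[-n, n] is the corresponding window of some point of X. *)
Definition closed_subshift (X : (int -> A) -> Prop) : Prop :=
  forall x : int -> A,
    (forall n : nat, exists y, X y /\
        forall i : int, - (n%:Z) <= i <= n%:Z -> y i = x i) -> X x.

Definition shift_space (X : (int -> A) -> Prop) : Prop :=
  closed_subshift X /\ (forall x, X x <-> X (shift x)).

Definition occurs (u : seq A) (x : int -> A) : Prop :=
  exists i : int, forall k : nat, (k < size u)%N ->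
    x (i + k%:Z) = nth (x 0) u k.

Definition inB (X : (int -> A) -> Prop) (u : seq A) : Prop :=
  (0 < size u)%N /\ exists x, X x /\ occurs u x.

Definition Bn (X : (int -> A) -> Prop) (n : nat) : {set n.-tuple A} :=
  [set t : n.-tuple A | `[< inB X (val t) >]].

Definition Bwr (X : (int -> A) -> Prop) (w : seq A) (r : nat) : {set r.-tuple A} :=
  [set t : r.-tuple A | `[< inB X (w ++ val t) >]].

Definition almost_specification (X : (int -> A) -> Prop) : Prop :=
  exists N : nat, (1 <= N)%N /\
    forall u v : seq A, inB X u -> inB X v ->
      exists w : seq A, inB X w /\ (size w <= N)%N /\ inB X (u ++ w ++ v).

Definition boundedly_supermultiplicative (R : realType)
    (X : (int -> A) -> Prop) : Prop :=
  exists K : R, 1 <= K /\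
    forall m n : nat, (1 <= m)%N -> (1 <= n)%N ->
      (#|Bn X m| * #|Bn X n|)%:R <= K * #|Bn X (m + n)|%:R.

Definition balanced (R : realType) (X : (int -> A) -> Prop) : Prop :=
  exists B : R, 0 < B /\
    forall (w : seq A) (r : nat), inB X w -> (1 <= r)%N ->
      B <= #|Bwr X w r|%:R / #|Bn X r|%:R.

End Shifts.

From mathcomp Require Import all_boot all_order all_algebra.
From mathcomp Require Import boolp reals.
Set Implicit Arguments. Unset Strict Implicit. Unset Printing Implicit Defensive.
Import Order.TTheory GRing.Theory Num.Theory.

(* Proof idea: almost specification glues u ∈ B_m and v ∈ B_n into a word
   u w v ∈ B with |w| <= N. Its first m + n letters lie in B_(m+n), and the
   pair (u, v) is recovered from them together with the remaining |w| <= N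
   letters, of which there are at most (|A|+1)^N choices; hence
   |B_m| |B_n| <= (|A|+1)^N |B_(m+n)|. Gluing ω to v ∈ B_r the same way,
   the first r letters of w v lie in B_(ω,r), so |B_r| <= (|A|+1)^N |B_(ω,r)|. *)

Section ShortWords.
Variable A : finType.

Definition pad_word (c : nat) (s : seq A) : c.-tuple (option A) :=
  insubd [tuple of nseq c None] (map Some s ++ nseq (c - size s) None).

Lemma pad_word_inj c s1 s2 : (size s1 <= c)%N -> (size s2 <= c)%N ->
  pad_word c s1 = pad_word c s2 -> s1 = s2.
Proof.
have pmap_pad s k : pmap id (map Some s ++ nseq k None) = s.
  by elim: s => [|a s IHs] /=; [elim: k | rewrite IHs].
move=> s1c s2c /(congr1 val); rewrite !val_insubd !size_cat !size_map !size_nseq.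
by rewrite !subnKC // !eqxx => /(congr1 (pmap id)); rewrite !pmap_pad.
Qed.

Lemma split_tuple k (S : seq A) :
  (k <= size S)%N -> exists (q : k.-tuple A) s, S = val q ++ s.
Proof.
move=> kS; have take_k : size (take k S) == k by rewrite size_takel.
by exists (Tuple take_k), (drop k S); rewrite cat_take_drop.
Qed.

Section Coding.
Variables (T : finType) (D : {set T}) (k c : nat) (E : {set k.-tuple A}).
Variable P : T -> seq A -> Prop.
Hypothesis coded : forall p, p \in D ->
  exists (q : k.-tuple A) s, [/\ q \in E, (size s <= c)%N & P p (val q ++ s)].
Hypothesis decoded : forall p1 p2 S,
  p1 \in D -> p2 \in D -> P p1 S -> P p2 S -> p1 = p2.

Lemma card_coded_le : (#|D| <= #|E| * (#|A|).+1 ^ c)%N.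
Proof.
have [->|[p0 p0D]] := set_0Vmem D; first by rewrite cards0.
have [q0 [s0 _]] := coded p0D.
have /fin_all_exists[code code_spec] : forall p, exists qs : k.-tuple A * seq A,
    p \in D -> [/\ qs.1 \in E, (size qs.2 <= c)%N & P p (val qs.1 ++ qs.2)].
  move=> p; case: (boolP (p \in D)) => [pD|_]; last by exists (q0, s0).
  by have [q [s qs]] := coded pD; exists (q, s).
pose enc p := ((code p).1, pad_word c (code p).2).
have <- : #|enc @: D| = #|D|.
  apply: card_in_imset => p1 p2 p1D p2D [e1 e2].
  have [_ s1c P1] := code_spec p1 p1D; have [_ s2c P2] := code_spec p2 p2D.
  apply: (decoded p1D p2D P1); rewrite e1 (pad_word_inj s1c s2c e2); exact: P2.
rewrite -card_option -card_tuple -cardsT -cardsX.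
apply/subset_leq_card/subsetP => _ /imsetP[p pD ->].
by have [qE _ _] := code_spec p pD; rewrite in_setX qE in_setT.
Qed.
End Coding.

Lemma cat_suffix_inj (s1 s2 t1 t2 : seq A) :
  size t1 = size t2 -> s1 ++ t1 = s2 ++ t2 -> t1 = t2.
Proof.
move=> size_t e; have size_s : size s1 = size s2.
  by move/(congr1 size): e; rewrite !size_cat size_t => /addIn.
by move/eqP: e; rewrite eqseq_cat // => /andP[_ /eqP].
Qed.

End ShortWords.

Section Language.
Variables (A : finType) (X : (int -> A) -> Prop).

Lemma inB_prefix (s t : seq A) : inB X (s ++ t) -> (0 < size s)%N -> inB X s.
Proof.
move=> [_ [x [Xx [i occ]]]] s_gt0; split=> //; exists x; split=> //.
exists i => j js; rewrite occ ?nth_cat ?js //.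
by rewrite size_cat (leq_trans js) ?leq_addr.
Qed.

Lemma card_Bn_gt0 n : (exists x, X x) -> (0 < n)%N -> (0 < #|Bn X n|)%N.
Proof.
move=> [x Xx] n_gt0; pose window := mkseq (fun k => x (Posz k)) n.
have size_window : size window == n by rewrite size_mkseq.
apply/card_gt0P; exists (Tuple size_window); rewrite inE; apply/asboolP.
split; first by rewrite size_mkseq.
by exists x; split=> //; exists 0 => k; rewrite size_mkseq => kn; rewrite nth_mkseq // add0r.
Qed.

Section Specification.
Variable N : nat.
Hypothesis spec : forall u v : seq A, inB X u -> inB X v ->
  exists w : seq A, inB X w /\ (size w <= N)%N /\ inB X (u ++ w ++ v).

Lemma card_Bn_mul_le m n : (0 < m)%N ->
  (#|Bn X m| * #|Bn X n| <= #|Bn X (m + n)| * (#|A|).+1 ^ N)%N.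
Proof.
move=> m_gt0; rewrite -cardsX.
apply: (@card_coded_le _ _ _ _ _ _ (fun p S => exists w, S = val p.1 ++ w ++ val p.2)).
- move=> [u v]; rewrite in_setX !inE => /andP[/asboolP Bu /asboolP Bv].
  have [w [_ [wN Buwv]]] := spec Bu Bv.
  have [|q [s uwv]] := @split_tuple _ (m + n) (val u ++ w ++ val v).
    by rewrite !size_cat !size_tuple addnCA leq_addl.
  have size_s : size s = size w.
    by move/(congr1 size): uwv; rewrite !size_cat !size_tuple addnCA addnC => /addnI.
  exists q, s; split; last by exists w; rewrite -uwv.
  + rewrite inE; apply/asboolP/(inB_prefix (t := s)); first by rewrite -uwv.
    by rewrite size_tuple addn_gt0 m_gt0.
  + by rewrite size_s.
- move=> [u1 v1] [u2 v2] S _ _ [w1 ->] [w2 /= /eqP].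
  rewrite eqseq_cat ?size_tuple // => /andP[/eqP/val_inj-> /eqP e].
  by congr pair; apply/val_inj/(cat_suffix_inj _ e); rewrite !size_tuple.
Qed.

Lemma card_Bn_le_Bwr (om : seq A) r : inB X om -> (0 < r)%N ->
  (#|Bn X r| <= #|Bwr X om r| * (#|A|).+1 ^ N)%N.
Proof.
move=> Bom r_gt0.
apply: (@card_coded_le _ _ _ _ _ _ (fun v S => exists w, S = w ++ val v)).
- move=> v; rewrite inE => /asboolP Bv.
  have [w [_ [wN Bomwv]]] := spec Bom Bv.
  have [|q [s wv]] := @split_tuple _ r (w ++ val v).
    by rewrite size_cat size_tuple leq_addl.
  have size_s : size s = size w.
    by move/(congr1 size): wv; rewrite !size_cat !size_tuple addnC => /addnI.
  exists q, s; split; last by exists w; rewrite -wv.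
  + rewrite inE; apply/asboolP/(inB_prefix (t := s)); first by rewrite -catA -wv.
    by rewrite size_cat size_tuple addn_gt0 r_gt0 orbT.
  + by rewrite size_s.
- move=> v1 v2 S _ _ [w1 ->] [w2 e]; apply: val_inj.
  by apply: (cat_suffix_inj _ e); rewrite !size_tuple.
Qed.

End Specification.
End Language.

Local Open Scope ring_scope.

Theorem theorem3p7 (R : realType) (A : finType) (X : (int -> A) -> Prop) :
  shift_space X -> almost_specification X ->
  boundedly_supermultiplicative R X /\ balanced R X.
Proof.
move=> _ [N [_ spec]]; set K := ((#|A|).+1 ^ N)%N.
have K_gt0 : (0 < K)%N by rewrite expn_gt0.
split.
- exists K%:R; split; first by rewrite ler1n.
  move=> m n m_gt0 _; rewrite -natrM ler_nat [leqRHS]mulnC.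
  exact: card_Bn_mul_le.
- exists (K%:R^-1); split; first by rewrite invr_gt0 ltr0n.
  move=> w r Bw r_gt0.
  have Bn_gt0 : (0 < #|Bn X r|)%N.
    by case: Bw => _ [x [Xx _]]; apply: card_Bn_gt0 => //; exists x.
  rewrite ler_pdivlMr ?ltr0n // mulrC ler_pdivrMr ?ltr0n //.
  by rewrite -natrM ler_nat card_Bn_le_Bwr.
Qed.
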